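(* Let $k$ be a positive integer. A graph $G$ is not b-$\chi$-$k$-bounded if and only if $G$ contains, as an induced subgraph, a minimal $\chi$-$k$-unbounded b-atom.
   Context: $\chi(G)$ denotes the chromatic number. A proper $k$-coloring of $G$ is a surjective map $c:V(G)\to\{1,\ldots,k\}$ with $c(u)\ne c(v)$ for every edge $uv$; a vertex of color $i$ is a b-vertex if it has a neighbor of every color $j\ne i$; a b-$k$-coloring is a proper $k$-coloring in which every color class contains a b-vertex; $\varphi(G)$ is the largest $k$ such that $G$ has a b-$k$-coloring. A b-$t$-atom is a graph $A$ whose vertex set can be partitioned into $t$ sets $D_1,\ldots,D_t$, each $D_i$ containing a special vertex $c_i$, such that each $D_i$ is independent with $|D_i|\le t$ and, for all $i\ne j$, $c_i$ has a neighbor in $D_j$. A graph $G$ is b-$\chi$-$k$-bounded if $\varphi(G')-\chi(G')\le k$ for every induced subgraph $G'$ of $G$. A graph $G$ is a $\chi$-$k$-unbounded b-atom if $\varphi(G)-\chi(G)>k$ and $G$ is a b-$t$-atom for some integer $t$; it is minimal if no proper induced subgraph of it is a $\chi$-$k$-unbounded b-atom. *)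

(* A finite simple graph is a symmetric irreflexive relation
   e on a finite vertex type V; an induced subgraph is given by a vertex set
   S : {set V} (the graph induced by e on S). *)
From mathcomp Require Import all_boot.
Set Implicit Arguments. Unset Strict Implicit. Unset Printing Implicit Defensive.

Section Graphs.
Variables (V : finType) (e : rel V).

Definition proper_coloring (S : {set V}) (k : nat) (c : V -> nat) : Prop :=
  [/\ (forall x, x \in S -> c x < k),
      (forall i, i < k -> exists2 x, x \in S & c x = i) &
      (forall x y, x \in S -> y \in S -> e x y -> c x <> c y)].

Definition b_vertex (S : {set V}) (k : nat) (c : V -> nat) (x : V) : Prop :=
  x \in S /\
  forall j, j < k -> j <> c x -> exists2 y, y \in S & e x y /\ c y = j.

Definition b_coloring (S : {set V}) (k : nat) (c : V -> nat) : Prop :=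
  proper_coloring S k c /\
  forall i, i < k -> exists2 x, b_vertex S k c x & c x = i.

Definition is_chromatic_number (S : {set V}) (n : nat) : Prop :=
  (exists c, proper_coloring S n c) /\
  forall m c, proper_coloring S m c -> n <= m.

Definition is_b_chromatic_number (S : {set V}) (n : nat) : Prop :=
  (exists c, b_coloring S n c) /\
  forall m c, b_coloring S m c -> m <= n.

Definition chi_k_unbounded (k : nat) (S : {set V}) : Prop :=
  exists p q, [/\ is_b_chromatic_number S p, is_chromatic_number S q & q + k < p].

Definition b_chi_bounded (k : nat) (S : {set V}) : Prop :=
  forall S' : {set V}, S' \subset S -> ~ chi_k_unbounded k S'.

(* G[S] is a b-t-atom: D_i = {x in S | d x = i}, special vertices cs i. *)
Definition b_atom (t : nat) (S : {set V}) : Prop :=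
  exists (d : V -> nat) (cs : nat -> V),
  [/\ (forall x, x \in S -> d x < t),
      (forall i, i < t -> cs i \in S /\ d (cs i) = i),
      (forall x y, x \in S -> y \in S -> d x = d y -> ~~ e x y),
      (forall i, i < t -> #|[set x in S | d x == i]| <= t) &
      (forall i j, i < t -> j < t -> i <> j ->
         exists2 y, y \in S & d y = j /\ e (cs i) y)].

Definition unbounded_b_atom (k : nat) (S : {set V}) : Prop :=
  chi_k_unbounded k S /\ exists t, b_atom t S.

Definition minimal_unbounded_b_atom (k : nat) (S : {set V}) : Prop :=
  unbounded_b_atom k S /\ forall S' : {set V}, S' \proper S -> ~ unbounded_b_atom k S'.

End Graphs.

(* If phi(G') - chi(G') > k for some induced subgraph G', fix a b-coloring of
   G' with phi(G') colors.  Keeping, for every color i, one b-vertex c_i of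
   color i together with one neighbor of c_i of each other color gives an
   induced subgraph H which is a b-phi(G')-atom (its color classes have at most
   phi(G') vertices), still carries that b-coloring, and has chi(H) <= chi(G');
   so H is a chi-k-unbounded b-atom.  A smallest such atom is minimal.  The
   converse holds because an unbounded b-atom is itself a witness of
   unboundedness. *)
From Stdlib Require Import Classical.
From mathcomp Require Import all_boot.
From mathcomp Require Import zify.

Set Implicit Arguments.
Unset Strict Implicit.
Unset Printing Implicit Defensive.

Lemma ex_minimal_nat (P : nat -> Prop) n :
  P n -> exists m, P m /\ forall j, P j -> m <= j.
Proof.
elim: n {-2}n (leqnn n) => [|N IH] n le_nN Pn.
  by exists n; split=> // j _; move: le_nN; rewrite leqn0 => /eqP ->.
have [[j [lt_jn Pj]] | no_smaller] := classic (exists j, j < n /\ P j).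
  by apply: (IH j) => //; lia.
exists n; split=> // j Pj; rewrite leqNgt; apply/negP => lt_jn.
by apply: no_smaller; exists j.
Qed.

Lemma ex_maximal_nat (P : nat -> Prop) n N :
  (forall j, P j -> j <= N) -> P n -> exists m, P m /\ forall j, P j -> j <= m.
Proof.
move=> bounded Pn.
pose PN i := i <= N /\ P (N - i).
have PN_sub j : P j -> PN (N - j).
  by move=> Pj; split; [exact: leq_subr | rewrite subKn //; exact: bounded].
have [i [[le_iN PNi] min_i]] := ex_minimal_nat (P := PN) (PN_sub n Pn).
exists (N - i); split=> // j Pj.
by have := min_i _ (PN_sub j Pj); have := bounded j Pj; lia.
Qed.

Section BChromatic.
Variables (V : finType) (e : rel V).

Lemma ex_proper_minimal_set (P : {set V} -> Prop) (A : {set V}) :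
  P A -> exists2 B : {set V}, P B & forall C : {set V}, C \proper B -> ~ P C.
Proof.
move=> PA.
have [n [[B [<- PB]] min_n]] :=
  ex_minimal_nat (P := fun n => exists B : {set V}, #|B| = n /\ P B)
    (ex_intro _ A (conj erefl PA)).
exists B => // C ltCB PC.
by have := min_n #|C| (ex_intro _ C (conj erefl PC)); have := proper_card ltCB; lia.
Qed.

(* Removing an unused color value shrinks the palette by one; iterate. *)
Lemma proper_coloring_compress (S : {set V}) n c :
  (forall x, x \in S -> c x < n) ->
  (forall x y, x \in S -> y \in S -> e x y -> c x <> c y) ->
  exists2 m, m <= n & exists c', proper_coloring e S m c'.
Proof.
elim: n c => [|n IH] c c_lt c_proper.
  by exists 0 => //; exists c; split.
have [all_used | /forallPn [i0 /existsPn i0_unused]] :=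
  boolP [forall i : 'I_n.+1, [exists x in S, c x == i]].
  exists n.+1 => //; exists c; split=> // i lt_in.
  move/forallP: all_used => /(_ (Ordinal lt_in)) /existsP [x /andP [xS /eqP]].
  by exists x.
have c_neq x : x \in S -> c x <> i0.
  by move=> xS; move: (i0_unused x); rewrite xS => /eqP.
pose c' x := if i0 < c x then (c x).-1 else c x.
have c'_lt x : x \in S -> c' x < n.
  move=> xS; rewrite /c'; have := c_lt x xS; have := c_neq x xS.
  by have := ltn_ord i0; case: ifP; lia.
have c'_proper x y : x \in S -> y \in S -> e x y -> c' x <> c' y.
  move=> xS yS exy; have := c_proper x y xS yS exy; rewrite /c'.
  by have := c_neq x xS; have := c_neq y yS; case: ifP; case: ifP; lia.
have [m le_mn col] := IH c' c'_lt c'_proper.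
by exists m => //; lia.
Qed.

Lemma chromatic_number_subset (S H : {set V}) q c :
  H \subset S -> proper_coloring e S q c ->
  exists2 qH, is_chromatic_number e H qH & qH <= q.
Proof.
move=> /subsetP sHS [c_lt _ c_proper].
have [m le_mq [cH colH]] := proper_coloring_compress
  (fun x xH => c_lt x (sHS x xH)) (fun x y xH yH => c_proper x y (sHS x xH) (sHS y yH)).
have [qH [[c1 col1] min_qH]] :=
  ex_minimal_nat (P := fun m => exists c, proper_coloring e H m c) (ex_intro _ cH colH).
exists qH; last by have := min_qH m (ex_intro _ cH colH); lia.
by split=> [|m' c' col']; [exists c1 | exact: min_qH m' (ex_intro _ c' col')].
Qed.

Lemma b_coloring_card (S : {set V}) m c : b_coloring e S m c -> m <= #|S|.
Proof.
move=> [[_ c_onto _] _].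
rewrite -(size_iota 0 m) cardE -(size_map c); apply: uniq_leq_size (iota_uniq _ _) _.
move=> i; rewrite mem_iota add0n => /andP [_ lt_im].
by have [x xS <-] := c_onto i lt_im; apply: map_f; rewrite mem_enum.
Qed.

Lemma b_chromatic_number_ge (S : {set V}) n c :
  b_coloring e S n c -> exists2 p, is_b_chromatic_number e S p & n <= p.
Proof.
move=> col.
have [p [[c1 col1] max_p]] := ex_maximal_nat (P := fun m => exists c, b_coloring e S m c)
  (fun j '(ex_intro c2 col2) => b_coloring_card col2) (ex_intro _ c col).
exists p; last exact: max_p n (ex_intro _ c col).
by split=> [|m c2 col2]; [exists c1 | exact: max_p m (ex_intro _ c2 col2)].
Qed.

Lemma chi_k_unbounded_subset (S H : {set V}) k p c q c' :
  H \subset S -> b_coloring e H p c -> proper_coloring e S q c' -> q + k < p ->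
  chi_k_unbounded e k H.
Proof.
move=> sHS colH colS lt_qkp.
have [pH phiH le_p] := b_chromatic_number_ge colH.
have [qH chiH le_q] := chromatic_number_subset sHS colS.
by exists pH, qH; split=> //; lia.
Qed.

Section AtomOfBColoring.
(* [x0] only fills the never-taken [None] branches of the picks below. *)
Variables (S : {set V}) (p : nat) (c : V -> nat) (x0 : V).
Hypothesis col : b_coloring e S p c.

Definition b_vertexb x :=
  (x \in S) && [forall j : 'I_p, (val j != c x) ==> [exists y in S, e x y && (c y == j)]].

Lemma b_vertexP x : reflect (b_vertex e S p c x) (b_vertexb x).
Proof.
apply: (iffP andP) => [[xS /forallP nbrs] | [xS nbrs]]; split=> //.
  move=> j lt_jp neq_j; move: (nbrs (Ordinal lt_jp)) => /implyP /= /(_ (introN eqP neq_j)).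
  by case/existsP=> y /and3P [yS exy /eqP]; exists y.
apply/forallP => j; apply/implyP => /eqP neq_j.
have [y yS [exy cy]] := nbrs j (ltn_ord j) neq_j.
by apply/existsP; exists y; rewrite yS exy cy eqxx.
Qed.

Definition special_vertex i : V := odflt x0 [pick x | b_vertexb x && (c x == i)].

Definition atom_vertex i j : V :=
  if i == j then special_vertex i
  else odflt x0 [pick y in S | e (special_vertex i) y && (c y == j)].

Lemma special_vertexP i :
  i < p -> b_vertex e S p c (special_vertex i) /\ c (special_vertex i) = i.
Proof.
move=> lt_ip; rewrite /special_vertex.
case: pickP => [x /andP [/b_vertexP bx /eqP] | none] //=.
have [x bx cx] := col.2 i lt_ip.
by move: (none x); rewrite cx eqxx andbT => /b_vertexP.
Qed.

Lemma atom_vertexP i j : i < p -> j < p ->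
  [/\ atom_vertex i j \in S, c (atom_vertex i j) = j
    & i <> j -> e (special_vertex i) (atom_vertex i j)].
Proof.
move=> lt_ip lt_jp; have [[xS nbrs] cx] := special_vertexP lt_ip.
rewrite /atom_vertex; case: eqVneq => [<- | neq_ij]; first by split.
case: pickP => [y /and3P [yS exy /eqP cy] | none] //=.
have neq_j : j <> c (special_vertex i) by rewrite cx; apply/eqP; rewrite eq_sym.
have [y yS [exy cy]] := nbrs j lt_jp neq_j.
by move: (none y); rewrite yS exy cy eqxx.
Qed.

Definition atom_of_b_coloring : {set V} :=
  [set atom_vertex (val i) (val j) | i : 'I_p, j : 'I_p].

Lemma atom_vertex_in i j : i < p -> j < p -> atom_vertex i j \in atom_of_b_coloring.
Proof. by move=> lt_ip lt_jp; apply/imset2P; exists (Ordinal lt_ip) (Ordinal lt_jp). Qed.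

Lemma special_vertex_in i : i < p -> special_vertex i \in atom_of_b_coloring.
Proof. by move=> lt_ip; have := atom_vertex_in lt_ip lt_ip; rewrite /atom_vertex eqxx. Qed.

Lemma atom_of_b_coloring_sub : atom_of_b_coloring \subset S.
Proof.
by apply/subsetP => x /imset2P [i j _ _ ->]; case: (atom_vertexP (ltn_ord i) (ltn_ord j)).
Qed.

Lemma b_coloring_on_atom : b_coloring e atom_of_b_coloring p c.
Proof.
have [[c_lt _ c_proper] _] := col; have /subsetP sAS := atom_of_b_coloring_sub.
split; first split.
- by move=> x /sAS /c_lt.
- move=> i lt_ip; exists (special_vertex i); first exact: special_vertex_in.
  by case: (special_vertexP lt_ip).
- by move=> x y /sAS xS /sAS yS; exact: c_proper.
move=> i lt_ip; have [_ ci] := special_vertexP lt_ip.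
exists (special_vertex i) => //; split; first exact: special_vertex_in.
move=> j lt_jp; rewrite ci => neq_ji.
have [_ cy exy] := atom_vertexP lt_ip lt_jp.
by exists (atom_vertex i j); [exact: atom_vertex_in | split=> //; apply: exy => /esym].
Qed.

Lemma b_atom_of_b_coloring : b_atom e p atom_of_b_coloring.
Proof.
have [[c_lt _ c_proper] _] := col; have /subsetP sAS := atom_of_b_coloring_sub.
exists c, special_vertex; split.
- by move=> x /sAS /c_lt.
- by move=> i lt_ip; split; [exact: special_vertex_in | case: (special_vertexP lt_ip)].
- move=> x y /sAS xS /sAS yS cxy; apply/negP => exy.
  exact: c_proper x y xS yS exy cxy.
- move=> j _.
  have sub : [set x in atom_of_b_coloring | c x == j] \subset
             [set atom_vertex (val i) j | i : 'I_p].
    apply/subsetP => x; rewrite inE => /andP [/imset2P [i j' _ _ ->]].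
    have [_ -> _] := atom_vertexP (ltn_ord i) (ltn_ord j') => /eqP <-.
    by apply/imsetP; exists i.
  apply: leq_trans (subset_leq_card sub) _.
  by apply: leq_trans (leq_imset_card _ _) _; rewrite card_ord.
- move=> i j lt_ip lt_jp neq_ij; have [_ cy exy] := atom_vertexP lt_ip lt_jp.
  by exists (atom_vertex i j); [exact: atom_vertex_in | split; last exact: exy].
Qed.

End AtomOfBColoring.

Lemma ex_unbounded_b_atom k S : chi_k_unbounded e k S -> exists H, unbounded_b_atom e k H.
Proof.
move=> [p [q [[[c col] _] [[c' col'] _] lt_qkp]]].
have [x0 _ _] := col.2 0 (leq_ltn_trans (leq0n _) lt_qkp).
exists (atom_of_b_coloring S p c x0); split; last by exists p; exact: b_atom_of_b_coloring.
apply: (chi_k_unbounded_subset _ _ col' lt_qkp).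
  exact: atom_of_b_coloring_sub.
exact: b_coloring_on_atom.
Qed.

End BChromatic.

Theorem mainTheorem16 (V : finType) (e : rel V)
  (e_sym : symmetric e) (e_irr : irreflexive e) (k : nat) (k_pos : 0 < k) :
  ~ b_chi_bounded e k [set: V] <->
  exists S : {set V}, minimal_unbounded_b_atom e k S.
Proof.
split=> [not_bounded | [S [[unbS _] _]] bounded]; last exact: bounded S (subsetT S) unbS.
have [S unbS] : exists S, chi_k_unbounded e k S.
  by apply: NNPP => none; apply: not_bounded => S _ unbS; apply: none; exists S.
have [H atomH] := ex_unbounded_b_atom unbS.
by have [A atomA minA] := ex_proper_minimal_set atomH; exists A.
Qed.
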